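(* Let $C$ be a small category. If $f:X\to Y$ is an isomorphism in $Sd(C)$, then $X=Y$ and $f=\mathrm{id}_X$.
   Context: For $q\ge0$, $[q]=\{0<\dots<q\}$ viewed as a category. A $q$-simplex of the nerve $NC$ is a functor $X:[q]\to C$; $q_X=q$. It is non-degenerate if none of its arrows $X_{i-1}\to X_i$ is an identity. $\Delta/C$ has all simplices as objects and as morphisms $X\to Y$ the order-preserving $\xi:[q_X]\to[q_Y]$ with $Y\circ\xi=X$, written $\xi_*$. For a $q$-simplex $X$ and surjective order-preserving $s:[q+1]\to[q]$ with order-preserving right inverses $d,d'$, $d_*,d'_*:X\to X\circ s$ are elementary equivalent; $\sim$ is the smallest equivalence relation on morphisms of $\Delta/C$ compatible with composition containing these pairs; $[\Delta/C]$ is the quotient category (morphisms are classes $[\xi_*]$); $Sd(C)$ is the full subcategory of $[\Delta/C]$ on the non-degenerate simplices. *)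

From mathcomp Require Import all_boot.
Unset Printing Implicit Defensive.

(* A small category, single-sorted presentation: a type of objects, a type of
   arrows, domain/codomain, identities and composition ([comp g f] = g o f,
   meaningful when [cod f = dom g]). *)
Record category := Category {
  Ob : Type;
  Arr : Type;
  dom : Arr -> Ob;
  cod : Arr -> Ob;
  idA : Ob -> Arr;
  comp : Arr -> Arr -> Arr;
  dom_id : forall x, dom (idA x) = x;
  cod_id : forall x, cod (idA x) = x;
  dom_comp : forall f g, cod f = dom g -> dom (comp g f) = dom f;
  cod_comp : forall f g, cod f = dom g -> cod (comp g f) = cod g;
  comp_id_r : forall f, comp f (idA (dom f)) = f;
  comp_id_l : forall f, comp (idA (cod f)) f = f;
  comp_assoc : forall f g h, cod f = dom g -> cod g = dom h ->
      comp h (comp g f) = comp (comp h g) f }.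

Arguments dom {c} _.
Arguments cod {c} _.
Arguments idA {c} _.
Arguments comp {c} _ _.

Definition mono m n (f : 'I_m -> 'I_n) :=
  forall i j : 'I_m, (i <= j)%N -> (f i <= f j)%N.
Arguments mono {m n} f.

Section Nerve.
Variable C : category.

(* A q-simplex of the nerve: a functor [q] -> C, q = sdim. *)
Record simplex := Simplex {
  sdim : nat;
  sob : 'I_sdim.+1 -> Ob C;
  sar : forall i j : 'I_sdim.+1, (i <= j)%N -> Arr C;
  sar_dom : forall i j h, dom (sar i j h) = sob i;
  sar_cod : forall i j h, cod (sar i j h) = sob j;
  sar_id : forall (i : 'I_sdim.+1) (h : (i <= i)%N), sar i i h = idA (sob i);
  sar_comp : forall (i j k : 'I_sdim.+1) (hij : (i <= j)%N) (hjk : (j <= k)%N) (hik : (i <= k)%N),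
      sar i k hik = comp (sar j k hjk) (sar i j hij) }.

Definition precomp (X : simplex) p (xi : 'I_p.+1 -> 'I_(sdim X).+1)
  (hxi : mono xi) : simplex :=
  {| sdim := p;
     sob := fun i => sob X (xi i);
     sar := fun i j h => sar X (xi i) (xi j) (hxi i j h);
     sar_dom := fun i j h => sar_dom X _ _ _;
     sar_cod := fun i j h => sar_cod X _ _ _;
     sar_id := fun i h => sar_id X _ _;
     sar_comp := fun i j k hij hjk hik => sar_comp X _ _ _ _ _ _ |}.


Arguments precomp X {p xi} hxi.

Definition nondeg (X : simplex) : Prop :=
  forall (i j : 'I_(sdim X).+1) (h : (i <= j)%N), (j : nat) = i.+1 ->
    sar X i j h <> idA (sob X i).

(* Morphisms X -> Y of Delta/C: order-preserving xi with Y o xi = X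
   (functor equality written out componentwise). *)
Record hom (X Y : simplex) := Hom {
  hmap : 'I_(sdim X).+1 -> 'I_(sdim Y).+1;
  hmono : mono hmap;
  hob : forall i, sob Y (hmap i) = sob X i;
  har : forall (i j : 'I_(sdim X).+1) (h : (i <= j)%N),
      sar Y (hmap i) (hmap j) (hmono i j h) = sar X i j h }.


Arguments Hom {X Y} hmap hmono hob har.
Arguments hmap {X Y} _ _.
Arguments hmono {X Y} _ _ _ _.
Arguments hob {X Y} _ _.
Arguments har {X Y} _ _ _ _.

Definition hid (X : simplex) : hom X X :=
  @Hom X X (fun i => i) (fun i j h => h) (fun i => erefl) (fun i j h => erefl).

(* diagrammatic composition: hcomp f g = g o f *)
Definition hcomp (X Y Z : simplex) (f : hom X Y) (g : hom Y Z) : hom X Z :=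
  @Hom X Z (fun i => hmap g (hmap f i))
    (fun i j h => hmono g _ _ (hmono f i j h))
    (fun i => etrans (hob g (hmap f i)) (hob f i))
    (fun i j h => etrans (har g _ _ (hmono f i j h)) (har f i j h)).


Arguments hcomp {X Y Z} f g.

(* ~ : smallest equivalence relation on morphisms of Delta/C, compatible with
   composition, containing the elementary equivalences d_* ~ d'_* : X -> X o s. *)
Inductive hequiv : forall X Y : simplex, hom X Y -> hom X Y -> Prop :=
  | he_elem (X : simplex) (s : 'I_(sdim X).+2 -> 'I_(sdim X).+1) (hs : mono s)
      (s_surj : forall k, exists l, s l = k)
      (d d' : hom X (precomp X hs)) :
      cancel (hmap d) s -> cancel (hmap d') s -> hequiv _ _ d d'
  | he_refl X Y (f : hom X Y) : hequiv _ _ f f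
  | he_sym X Y (f g : hom X Y) : hequiv _ _ f g -> hequiv _ _ g f
  | he_trans X Y (f g h : hom X Y) : hequiv _ _ f g -> hequiv _ _ g h -> hequiv _ _ f h
  | he_compl X Y Z (f f' : hom X Y) (g : hom Y Z) :
      hequiv _ _ f f' -> hequiv _ _ (hcomp f g) (hcomp f' g)
  | he_compr X Y Z (f : hom X Y) (g g' : hom Y Z) :
      hequiv _ _ g g' -> hequiv _ _ (hcomp f g) (hcomp f g').


End Nerve.

Arguments precomp {C} X {p xi} hxi.
Arguments Hom {C X Y} hmap hmono hob har.
Arguments hmap {C X Y} _ _.
Arguments hmono {C X Y} _ _ _ _.
Arguments hob {C X Y} _ _.
Arguments har {C X Y} _ _ _ _.
Arguments hid {C} X.
Arguments hcomp {C X Y Z} f g.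
Arguments hequiv {C X Y} _ _.
Arguments nondeg {C} X.

Arguments hom {C} X Y.
Arguments sdim {C} s.
Arguments sob {C} s _.
Arguments sar {C} s i j _.

(* A morphism out of a non-degenerate simplex is strictly increasing on
   vertices: if it glued two consecutive vertices, the arrow between them would
   be sent to an identity and hence be one.  So morphisms both ways between
   non-degenerate simplices force equal dimensions, and a strictly increasing
   self-map of a finite chain is the identity; the simplices then coincide and
   the morphism is the identity. *)
From Stdlib Require Import FunctionalExtensionality ProofIrrelevance.
From mathcomp Require Import all_boot zify.

Set Implicit Arguments.
Unset Strict Implicit.

Lemma ord_strict_homo_ge m n (f : 'I_m -> 'I_n) :
  {homo f : i j / (i < j)%N} -> forall i : 'I_m, (i <= f i)%N.
Proof.
move=> f_lt [k lt_km] /=; elim: k lt_km => [|k IHk] lt_k1m //.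
have lt_km : (k < m)%N by apply: ltnW.
by apply: leq_ltn_trans (IHk lt_km) (f_lt (Ordinal lt_km) (Ordinal lt_k1m) _).
Qed.

Lemma ord_strict_homo_id n (f : 'I_n -> 'I_n) :
  {homo f : i j / (i < j)%N} -> f =1 id.
Proof.
move=> f_lt i; apply/val_inj/eqP; rewrite eqn_leq (ord_strict_homo_ge f_lt i) andbT.
pose g j := rev_ord (f (rev_ord j)).
have g_lt : {homo g : j k / (j < k)%N}.
  move=> j k lt_jk; rewrite /= ltn_sub2lE // ltnS.
  by apply: f_lt; rewrite /= ltn_sub2lE // ltnS.
have := ord_strict_homo_ge g_lt (rev_ord i); rewrite /g rev_ordK /=.
by have := ltn_ord (f i); lia.
Qed.

Lemma ord_strict_homo_inj m n (f : 'I_m -> 'I_n) :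
  {homo f : i j / (i < j)%N} -> injective f.
Proof.
move=> f_lt i j eq_fij; apply/val_inj.
by case: (ltngtP i j) => // /f_lt; rewrite eq_fij ltnn.
Qed.

Section NondegHom.
Variable C : category.

Lemma sar_congr (Y : simplex C) a b a' b' h h' :
  a = a' -> b = b' -> sar Y a b h = sar Y a' b' h'.
Proof. by move=> eq_a eq_b; subst; rewrite (bool_irrelevance h h'). Qed.

Lemma nondeg_hom_strict (X Y : simplex C) (f : hom X Y) :
  nondeg X -> {homo hmap f : i j / (i < j)%N}.
Proof.
move=> ndX i j lt_ij.
have lt_i1 : (i.+1 < (sdim X).+1)%N by apply: leq_ltn_trans lt_ij (ltn_ord j).
pose i' := Ordinal lt_i1.
have le_ii' : (i <= i')%N by apply: leqnSn.
rewrite ltn_neqAle (hmono f i j (ltnW lt_ij)) andbT.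
apply/negP => /eqP eq_fij.
have eq_fi' : hmap f i' = hmap f i.
  apply/ord_inj/eqP; rewrite eqn_leq (hmono f _ _ le_ii') andbT eq_fij.
  exact: hmono f i' j lt_ij.
apply: (ndX i i' le_ii' erefl).
rewrite -(har f i i' le_ii') -(hob f i) -(sar_id C Y (hmap f i) (leqnn _)).
exact: sar_congr.
Qed.

Lemma nondeg_hom_sdim_leq (X Y : simplex C) (f : hom X Y) :
  nondeg X -> (sdim X <= sdim Y)%N.
Proof.
move=> ndX; have := leq_card _ (ord_strict_homo_inj (nondeg_hom_strict f ndX)).
by rewrite !card_ord.
Qed.

Lemma nondeg_hom_val_id (X Y : simplex C) (f : hom X Y) :
  nondeg X -> sdim X = sdim Y -> forall i, hmap f i = i :> nat.
Proof.
move=> ndX eq_dim i.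
pose g i := cast_ord (congr1 S (esym eq_dim)) (hmap f i).
have g_lt : {homo g : i j / (i < j)%N} by move=> j k /(nondeg_hom_strict f ndX).
exact: (congr1 (@nat_of_ord _) (ord_strict_homo_id g_lt i)).
Qed.

Lemma hom_val_id_simplex_eq (X Y : simplex C) (f : hom X Y) :
  sdim X = sdim Y -> (forall i, hmap f i = i :> nat) -> X = Y.
Proof.
case: X f => p sX aX ? ? ? ?; case: Y => q sY aY ? ? ? ? /= f eq_pq.
subst q => f_id.
have {}f_id i : hmap f i = i by apply: val_inj; exact: f_id.
have eq_sob : sY = sX.
  by apply: functional_extensionality => i; have /= := hob f i; rewrite f_id.
subst sY.
have eq_sar : aY = aX.
  do 3![apply: functional_extensionality_dep => ?].
  by rewrite -[RHS](har f); symmetry; apply: sar_congr (f_id _) (f_id _).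
subst aY; f_equal; exact: proof_irrelevance.
Qed.

Lemma hom_val_id_eq_hid (X : simplex C) (f : hom X X) :
  (forall i, hmap f i = i :> nat) -> f = hid X.
Proof.
case: f => m m_mono m_ob m_ar /= m_id.
have eq_m : m = id by apply: functional_extensionality => i; apply: val_inj; exact: m_id.
subst m.
have eq_mono : m_mono = hmono (hid X) by exact: proof_irrelevance.
subst m_mono.
have eq_ob : m_ob = hob (hid X) by exact: proof_irrelevance.
have eq_ar : m_ar = har (hid X) by exact: proof_irrelevance.
by subst m_ob m_ar.
Qed.

End NondegHom.

Theorem corollary20 (C : category) (X Y : simplex C) (f : hom X Y) :
  nondeg X -> nondeg Y ->
  (exists g : hom Y X,
      hequiv (hcomp f g) (hid X) /\ hequiv (hcomp g f) (hid Y)) ->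
  exists e : X = Y, hequiv f (eq_rect X (hom X) (hid X) Y e).
Proof.
move=> ndX ndY [g _].
have eq_dim : sdim X = sdim Y.
  by apply/anti_leq; rewrite (nondeg_hom_sdim_leq f ndX) (nondeg_hom_sdim_leq g ndY).
have f_id := nondeg_hom_val_id f ndX eq_dim.
have eq_XY := hom_val_id_simplex_eq eq_dim f_id.
subst Y; exists erefl.
rewrite (hom_val_id_eq_hid f_id); exact: he_refl.
Qed.
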